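(* For $f\in C_c^\infty(\mathbb R)$ define $\Psi_Nf:\frac1N\mathbb Z\to\mathbb R$ by $(\Psi_Nf)(i)=f(i)$ if $i\in\frac1N\mathbb Z\setminus A_N$ and $(\Psi_Nf)(i)=f(0)$ otherwise, where $A_N=\frac1N\{-R,\dots,R\}\setminus\{0\}$ for a fixed integer $R\ge1$. Then for every $f\in C_c^\infty(\mathbb R)$ the sequence $\Psi_Nf\in H_N^{\mathrm{sip}}$ converges strongly to $f\in H^{\mathrm{sbm}}$ with respect to the Hilbert space convergence $H_N^{\mathrm{sip}}\to H^{\mathrm{sbm}}$.
   Context: $\gamma>0$; $\mu_N$ gives mass $\frac1N$ to each point of $\frac1N\mathbb Z$; $\nu_{\gamma,N}=\mu_N+\sqrt2\gamma\delta_0$; $H_N^{\mathrm{sip}}=L^2(\frac1N\mathbb Z,\nu_{\gamma,N})$; $H^{\mathrm{sbm}}=L^2(\mathbb R,dx+\sqrt2\gamma\delta_0)$. Hilbert convergence is witnessed by $C=\{f+\lambda\mathbf 1_{\{0\}}:f\in C_c^\infty(\mathbb R),\lambda\in\mathbb R\}$ and $\Phi_Nf=f|_{\frac1N\mathbb Z}$. $f_N\in H_N^{\mathrm{sip}}$ converges strongly to $f\in H^{\mathrm{sbm}}$ if there exist $\tilde f_M\in C$ with $\|\tilde f_M-f\|_{H^{\mathrm{sbm}}}\to0$ and $\lim_{M\to\infty}\limsup_{N\to\infty}\|\Phi_N\tilde f_M-f_N\|_{H_N^{\mathrm{sip}}}=0$. *)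

From Stdlib Require Import Reals ZArith.
From Coquelicot Require Import Coquelicot.
Open Scope R_scope.

Definition smooth (f : R -> R) : Prop := forall (n : nat) (x : R), ex_derive_n f n x.

Definition Cc_inf (f : R -> R) : Prop :=
  smooth f /\ exists K : R, forall x : R, K < Rabs x -> f x = 0.

Definition core_fun (f : R -> R) (lam : R) : R -> R :=
  fun x => f x + (if Req_EM_T x 0 then lam else 0).

(* Squared norm in H^sbm = L^2(R, dx + sqrt2 gamma delta_0).  The Lebesgue part
   is written as the improper Riemann integral over R; it is only ever applied to
   functions of the form (element of C) - (element of C), i.e. compactly supported
   and continuous off 0, for which it agrees with the Lebesgue integral. *)
Definition sbm_norm2 (gamma : R) (g : R -> R) : R :=
  RInt_gen (fun x => (g x)^2) (Rbar_locally m_infty) (Rbar_locally p_infty)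
  + sqrt 2 * gamma * (g 0)^2.

Definition sbm_norm (gamma : R) (g : R -> R) : R := sqrt (sbm_norm2 gamma g).

(* Elements of H_N^sip are functions on (1/N)Z, indexed here by k : Z (point k/N).
   Sum over Z of squares (only applied to finitely supported functions). *)
Definition sumZ_sq (u : Z -> R) : R :=
  Series (fun k : nat => (u (Z.of_nat k))^2)
  + Series (fun k : nat => (u (- Z.of_nat (S k))%Z)^2).

(* Squared norm in L^2((1/N)Z, mu_N + sqrt2 gamma delta_0), N >= 1 *)
Definition sip_norm2 (gamma : R) (N : nat) (u : Z -> R) : R :=
  / INR N * sumZ_sq u + sqrt 2 * gamma * (u 0%Z)^2.

Definition sip_norm (gamma : R) (N : nat) (u : Z -> R) : R := sqrt (sip_norm2 gamma N u).

Definition Phi (N : nat) (g : R -> R) : Z -> R := fun k => g (IZR k / INR N).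

Definition Psi (r N : nat) (f : R -> R) : Z -> R :=
  fun k => if (Z.leb 1 (Z.abs k) && Z.leb (Z.abs k) (Z.of_nat r))%bool
           then f 0 else f (IZR k / INR N).

(* Strong convergence of f_N in H_N^sip (N = 1,2,...) to f in H^sbm, with f a
   function in C (here f in C_c^infty).  fN N is the element of H_{N+1}^sip. *)
Definition strong_conv (gamma : R) (fN : nat -> Z -> R) (f : R -> R) : Prop :=
  exists (h : nat -> R -> R) (lam : nat -> R),
    (forall M, Cc_inf (h M)) /\
    is_lim_seq (fun M => sbm_norm gamma (fun x => core_fun (h M) (lam M) x - f x)) 0 /\
    filterlim
      (fun M : nat => LimSup_seq
         (fun N : nat => sip_norm gamma (S N)
            (fun k => Phi (S N) (core_fun (h M) (lam M)) k - fN N k)))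
      eventually (Rbar_locally 0).

(** The approximants can be taken constant, [h_M = f] with [lambda_M = 0], so the
    first condition of strong convergence holds trivially and it remains to show
    [|| Phi_N f - Psi_N f ||_N -> 0].  The difference vanishes off the [2R] points of
    [A_N], where it is [f(i) - f(0)] with [|i| <= R/N <= R], hence bounded by the
    maximum [B] of [(f - f 0)^2] on [[-R, R]].  Since [A_N] does not contain [0],
    the atom at the origin does not see the difference and
    [|| Phi_N f - Psi_N f ||_N^2 <= 2 (R + 1) B / N]. *)

From Stdlib Require Import Reals ZArith Lia Lra FunctionalExtensionality.
From Coquelicot Require Import Coquelicot.
Open Scope R_scope.

Lemma Series_finite (a : nat -> R) (m : nat) :
  (forall n, (m < n)%nat -> a n = 0) -> Series a = sum_n a m.
Proof.
  intros Ha. apply is_series_unique.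
  assert (Hstat : forall n, (m <= n)%nat -> sum_n a n = sum_n a m).
  { intros n Hn. induction Hn as [|n Hn IH]; [reflexivity|].
    rewrite sum_Sn, IH, Ha by lia. apply Rplus_0_r. }
  change (is_lim_seq (sum_n a) (sum_n a m)).
  apply is_lim_seq_ext_loc with (fun _ => sum_n a m); [|apply is_lim_seq_const].
  exists m. intros n Hn. symmetry. now apply Hstat.
Qed.

Lemma sum_n_le_const (a : nat -> R) (B : R) (n : nat) :
  (forall k, a k <= B) -> sum_n a n <= INR (S n) * B.
Proof.
  intros Ha. rewrite <- sum_n_const, !sum_n_Reals.
  apply sum_Rle. intros k _. apply Ha.
Qed.

Lemma is_lim_seq_div_INR_S (C : R) : is_lim_seq (fun N => C / INR (S N)) 0.
Proof.
  assert (Hinf : is_lim_seq (fun N => INR (S N)) p_infty).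
  { apply (is_lim_seq_incr_1 INR). apply is_lim_seq_INR. }
  assert (Hscal := is_lim_seq_scal_l _ C _ (is_lim_seq_inv _ _ Hinf ltac:(discriminate))).
  simpl in Hscal. rewrite Rmult_0_r in Hscal. exact Hscal.
Qed.

Lemma is_lim_seq_sqrt_0 (u : nat -> R) :
  is_lim_seq u 0 -> is_lim_seq (fun n => sqrt (u n)) 0.
Proof.
  intros Hu. rewrite <- sqrt_0.
  apply (filterlim_comp _ _ _ u sqrt eventually (locally 0)); [exact Hu|].
  apply continuity_pt_filterlim. apply continuity_pt_sqrt. lra.
Qed.

Lemma is_RInt_gen_0 (Fa Fb : (R -> Prop) -> Prop) :
  Filter Fa -> Filter Fb -> is_RInt_gen (fun _ => 0) Fa Fb 0.
Proof.
  intros HFa HFb P HP.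
  apply (Filter_prod Fa Fb _ (fun _ => True) (fun _ => True)); try apply filter_true.
  intros a b _ _. exists 0. split; [|exact (locally_singleton _ _ HP)].
  pose proof (is_RInt_const a b 0) as Hc.
  unfold scal in Hc; simpl in Hc; unfold mult in Hc; simpl in Hc.
  rewrite Rmult_0_r in Hc. exact Hc.
Qed.

Lemma sbm_norm_0 (gamma : R) : sbm_norm gamma (fun _ => 0) = 0.
Proof.
  unfold sbm_norm, sbm_norm2.
  replace (fun _ : R => 0 ^ 2) with (fun _ : R => 0) by (apply functional_extensionality; intros; ring).
  rewrite (is_RInt_gen_unique _ 0) by (apply is_RInt_gen_0; apply Rbar_locally_filter).
  replace (0 + sqrt 2 * gamma * 0 ^ 2) with 0 by ring. apply sqrt_0.
Qed.

Lemma core_fun_0 (f : R -> R) : core_fun f 0 = f.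
Proof.
  apply functional_extensionality. intros x. unfold core_fun.
  destruct (Req_EM_T x 0); ring.
Qed.

Lemma sumZ_sq_le (r : nat) (B : R) (u : Z -> R) :
  (forall k, (Z.of_nat r < Z.abs k)%Z -> u k = 0) -> (forall k, u k ^ 2 <= B) ->
  sumZ_sq u <= 2 * INR (S r) * B.
Proof.
  intros Hsupp HB. unfold sumZ_sq.
  rewrite (Series_finite _ r), (Series_finite _ r).
  - pose proof (sum_n_le_const (fun k => u (Z.of_nat k) ^ 2) B r (fun k => HB _)).
    pose proof (sum_n_le_const (fun k => u (- Z.of_nat (S k))%Z ^ 2) B r (fun k => HB _)).
    lra.
  - intros n Hn. rewrite Hsupp by lia. ring.
  - intros n Hn. rewrite Hsupp by lia. ring.
Qed.

Lemma sip_norm_le (gamma : R) (r N : nat) (B : R) (u : Z -> R) :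
  (forall k, (Z.of_nat r < Z.abs k)%Z -> u k = 0) -> (forall k, u k ^ 2 <= B) ->
  u 0%Z = 0 -> sip_norm gamma (S N) u <= sqrt (2 * INR (S r) * B / INR (S N)).
Proof.
  intros Hsupp HB H0. apply sqrt_le_1_alt. unfold sip_norm2.
  rewrite H0. replace (sqrt 2 * gamma * 0 ^ 2) with 0 by ring.
  rewrite Rplus_0_r. unfold Rdiv. rewrite (Rmult_comm _ (/ _)). apply Rmult_le_compat_l.
  - left. apply Rinv_0_lt_compat, lt_0_INR. lia.
  - now apply sumZ_sq_le.
Qed.

Lemma is_lim_seq_sip_norm_0 (gamma : R) (r : nat) (B : R) (u : nat -> Z -> R) :
  (forall N k, (Z.of_nat r < Z.abs k)%Z -> u N k = 0) ->
  (forall N k, u N k ^ 2 <= B) -> (forall N, u N 0%Z = 0) ->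
  is_lim_seq (fun N => sip_norm gamma (S N) (u N)) 0.
Proof.
  intros Hsupp HB H0.
  apply is_lim_seq_le_le with (fun _ => 0) (fun N => sqrt (2 * INR (S r) * B / INR (S N))).
  - intros N. split; [apply sqrt_pos|]. apply sip_norm_le; auto.
  - apply is_lim_seq_const.
  - apply is_lim_seq_sqrt_0, is_lim_seq_div_INR_S.
Qed.

Lemma strong_conv_of_Phi_sub (gamma : R) (fN : nat -> Z -> R) (f : R -> R) :
  Cc_inf f ->
  is_lim_seq (fun N => sip_norm gamma (S N) (fun k => Phi (S N) f k - fN N k)) 0 ->
  strong_conv gamma fN f.
Proof.
  intros Hf Hlim. exists (fun _ => f), (fun _ => 0).
  rewrite core_fun_0. split; [now intros|]. split.
  - apply is_lim_seq_ext with (fun _ => 0); [|apply is_lim_seq_const].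
    intros M. rewrite <- (sbm_norm_0 gamma). f_equal.
    apply functional_extensionality. intros x. ring.
  - rewrite (is_LimSup_seq_unique _ _ (is_lim_LimSup_seq _ _ Hlim)).
    exact (is_lim_seq_const 0).
Qed.

Lemma ex_derive_bounded_on_segment (g : R -> R) (a b : R) :
  (forall x, ex_derive g x) -> exists B, forall x, a <= x <= b -> g x <= B.
Proof.
  intros Hg. destruct (Rle_dec a b) as [Hab|Hab].
  - destruct (continuity_ab_maj g a b Hab) as [xmax [Hmax _]].
    + intros x _. apply continuity_pt_filterlim.
      apply (ex_derive_continuous (K := R_AbsRing) (V := R_NormedModule)), Hg.
    + now exists (g xmax).
  - exists 0. intros x Hx. lra.
Qed.

Lemma Rabs_IZR_div_INR_S_le (k : Z) (r N : nat) :
  (Z.abs k <= Z.of_nat r)%Z -> Rabs (IZR k / INR (S N)) <= INR r.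
Proof.
  intros Hk. assert (HN : 1 <= INR (S N)) by (apply (le_INR 1); lia).
  assert (Hkr : Rabs (IZR k) <= INR r).
  { rewrite <- abs_IZR, INR_IZR_INZ. now apply IZR_le. }
  unfold Rdiv. rewrite Rabs_mult, Rabs_inv, (Rabs_right (INR (S N))) by lra.
  apply Rle_trans with (Rabs (IZR k) * 1); [|lra].
  apply Rmult_le_compat_l; [apply Rabs_pos|].
  rewrite <- Rinv_1. apply Rinv_le_contravar; lra.
Qed.

Lemma Phi_sub_Psi_cases (r N : nat) (f : R -> R) (k : Z) :
  (1 <= Z.abs k <= Z.of_nat r)%Z /\ Phi N f k - Psi r N f k = f (IZR k / INR N) - f 0
  \/ Phi N f k - Psi r N f k = 0.
Proof.
  unfold Phi, Psi.
  destruct (Z.leb 1 (Z.abs k)) eqn:H1, (Z.leb (Z.abs k) (Z.of_nat r)) eqn:H2; simpl;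
    try (right; ring).
  left. apply Z.leb_le in H1, H2. auto with zarith.
Qed.

Theorem proposition5p14 (gamma : R) (r : nat) (f : R -> R) :
  0 < gamma -> (1 <= r)%nat -> Cc_inf f ->
  strong_conv gamma (fun N => Psi r (S N) f) f.
Proof.
  intros _ _ Hf. apply strong_conv_of_Phi_sub; [exact Hf|].
  destruct (ex_derive_bounded_on_segment (fun x => (f x - f 0) ^ 2) (- INR r) (INR r))
    as [B HB].
  { intros x. assert (Hdf : ex_derive f x) by exact (proj1 Hf 1%nat x).
    auto_derive. exact Hdf. }
  apply (is_lim_seq_sip_norm_0 gamma r B).
  - intros N k Hk. destruct (Phi_sub_Psi_cases r (S N) f k) as [[Hin _]|H0]; [lia|exact H0].
  - intros N k. destruct (Phi_sub_Psi_cases r (S N) f k) as [[Hin ->] | ->].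
    + apply HB, Rabs_le_between, Rabs_IZR_div_INR_S_le. lia.
    + specialize (HB 0). replace (0 ^ 2) with ((f 0 - f 0) ^ 2) by ring.
      apply HB. pose proof (pos_INR r). lra.
  - intros N. destruct (Phi_sub_Psi_cases r (S N) f 0) as [[Hin _]|H0]; [lia|exact H0].
Qed.
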